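(* Let $a\in(0,1)$, $p\in(0,1)$, and let $X=(X_t)_{t\ge0}$ be a stationary Markov chain generated by the copula $C(u,v)=a\min(u,v)+(1-a)\max(u+v-1,0)$ and Bernoulli($p$) marginal distribution. Then $X$ is exponentially $\psi$-mixing, i.e. there exist constants $K<\infty$ and $r\in[0,1)$ with $\psi(n)\le K r^n$ for all $n$; consequently $X$ is also exponentially $\phi$-, $\rho$-, $\beta$- and $\alpha$-mixing.
   Context: A stationary Markov chain $(X_t)$ is generated by a copula $C$ and a marginal cdf $F$ if each $X_t$ has cdf $F$ and $P(X_t\le x,X_{t+1}\le y)=C(F(x),F(y))$ for all $x,y$; Bernoulli($p$) means $P(X_t=1)=p=1-P(X_t=0)$. For the stationary Markov chain, the mixing coefficients at lag $n$ are defined with respect to $X_0$ and $X_n$: $\psi(n)=\sup\left|\frac{P(X_0\in A,X_n\in B)}{P(X_0\in A)P(X_n\in B)}-1\right|$ over events $A,B$ with $P(X_0\in A)>0$, $P(X_n\in B)>0$, and $\phi(n)=\sup\left|\frac{P(X_0\in A,X_n\in B)}{P(X_0\in A)}-P(X_n\in B)\right|$ over $A,B$ with $P(X_0\in A)>0$. The chain is $\psi$-mixing (resp. $\phi$-mixing) if $\psi(n)\to0$ (resp. $\phi(n)\to0$) as $n\to\infty$; $\rho$-, $\beta$-, $\alpha$-mixing are the standard notions (maximal correlation, absolute regularity, strong mixing). *)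

From HB Require Import structures.
From mathcomp Require Import all_boot all_order all_algebra.
From mathcomp Require Import all_classical all_reals all_analysis.
Set Implicit Arguments. Unset Strict Implicit. Unset Printing Implicit Defensive.
Import Order.TTheory GRing.Theory Num.Theory.
Import numFieldNormedType.Exports.
Local Open Scope classical_set_scope.
Local Open Scope ring_scope.

Definition mix_copula (R : realType) (a : R) (u v : R) : R :=
  a * Num.min u v + (1 - a) * Num.max (u + v - 1) 0.

Definition bernoulli_cdf (R : realType) (p : R) (x : R) : R :=
  if x < 0 then 0 else if x < 1 then 1 - p else 1.

Section Chain.
Context (d : measure_display) (Omega : measurableType d) (R : realType)
  (P : probability Omega R).

Definition prob (A : set Omega) : R := fine (P A).

Definition copula_generated (X : nat -> Omega -> R) (C : R -> R -> R)
    (F : R -> R) : Prop :=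
  (forall t, measurable_fun setT (X t)) /\
  (forall t x, prob (X t @^-1` `]-oo, x]) = F x) /\
  (forall t x y,
     prob (X t @^-1` `]-oo, x] `&` X t.+1 @^-1` `]-oo, y]) = C (F x) (F y)).

(* Markov property for a chain with (a.s.) discrete state space:
   P(X_0=x_0,...,X_{n+1}=x_{n+1}) P(X_n=x_n)
     = P(X_0=x_0,...,X_n=x_n) P(X_n=x_n, X_{n+1}=x_{n+1}),
   i.e. P(X_{n+1}=x_{n+1} | X_0..X_n) = P(X_{n+1}=x_{n+1} | X_n). *)
Definition discrete_markov (X : nat -> Omega -> R) : Prop :=
  forall (n : nat) (x : nat -> R),
    prob (\bigcap_(i in `I_(n.+2)) X i @^-1` [set x i]) *
      prob (X n @^-1` [set x n]) =
    prob (\bigcap_(i in `I_(n.+1)) X i @^-1` [set x i]) *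
      prob (X n @^-1` [set x n] `&` X n.+1 @^-1` [set x n.+1]).

Local Open Scope ereal_scope.

Definition psi_mix (X : nat -> Omega -> R) (n : nat) : \bar R :=
  ereal_sup [set e | exists A B : set R, [/\ measurable A, measurable B,
     (0 < prob (X 0%N @^-1` A))%R, (0 < prob (X n @^-1` B))%R &
     e = (`| prob (X 0%N @^-1` A `&` X n @^-1` B) /
             (prob (X 0%N @^-1` A) * prob (X n @^-1` B)) - 1 |)%:E]].

Definition phi_mix (X : nat -> Omega -> R) (n : nat) : \bar R :=
  ereal_sup [set e | exists A B : set R, [/\ measurable A, measurable B,
     (0 < prob (X 0%N @^-1` A))%R &
     e = (`| prob (X 0%N @^-1` A `&` X n @^-1` B) / prob (X 0%N @^-1` A)
             - prob (X n @^-1` B) |)%:E]].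

Definition alpha_mix (X : nat -> Omega -> R) (n : nat) : \bar R :=
  ereal_sup [set e | exists A B : set R, [/\ measurable A, measurable B &
     e = (`| prob (X 0%N @^-1` A `&` X n @^-1` B)
             - prob (X 0%N @^-1` A) * prob (X n @^-1` B) |)%:E]].

Definition fin_partition (I : nat) (A : 'I_I -> set R) : Prop :=
  [/\ forall i, measurable (A i), trivIset setT A & \bigcup_(i in setT) A i = setT].

Definition beta_mix (X : nat -> Omega -> R) (n : nat) : \bar R :=
  ereal_sup [set e | exists (I J : nat) (A : 'I_I -> set R) (B : 'I_J -> set R),
     [/\ fin_partition A, fin_partition B &
     e = (2^-1 * \sum_(i < I) \sum_(j < J)
            `| prob (X 0%N @^-1` A i `&` X n @^-1` B j)
               - prob (X 0%N @^-1` A i) * prob (X n @^-1` B j) |)%:E]].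

Definition expect (Y : Omega -> R) : R := Rintegral P setT Y.

Definition square_integrable (Y : Omega -> R) : Prop :=
  measurable_fun setT Y /\ P.-integrable setT (fun w => ((Y w) ^+ 2)%:E).

Definition var (Y : Omega -> R) : R := (expect (fun w => Y w ^+ 2) - expect Y ^+ 2)%R.

Definition cov (Y Z : Omega -> R) : R :=
  (expect (fun w => Y w * Z w) - expect Y * expect Z)%R.

Definition rho_mix (X : nat -> Omega -> R) (n : nat) : \bar R :=
  ereal_sup [set e | exists f g : R -> R,
     [/\ measurable_fun setT f /\ measurable_fun setT g,
         square_integrable (f \o X 0%N) /\ square_integrable (g \o X n),
         (0 < var (f \o X 0%N))%R /\ (0 < var (g \o X n))%R &
     e = (`| cov (f \o X 0%N) (g \o X n) |
            / Num.sqrt (var (f \o X 0%N) * var (g \o X n)))%:E]].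

Definition exp_decay (c : nat -> \bar R) : Prop :=
  exists K r : R, [/\ (0 <= r)%R, (r < 1)%R & forall n, c n <= (K * r ^+ n)%:E].

End Chain.

(** Almost surely every [X t] is [0] or [1], because the Bernoulli
    distribution function is flat off [{0, 1}].  The copula fixes
    [P(X_t = 0, X_(t+1) = 0) = C(1 - p, 1 - p)], so the transition matrix of
    the chain is [T = (1 - lam) Pi + lam I], where both rows of [Pi] are
    [(1 - p, p)] and [lam = 1 - (1 - a) / max(p, 1 - p)] lies in [(-1, 1)].
    Hence [T^n = Pi + lam^n (I - Pi)], and for all Borel sets [A], [B]
    [P(X_0 in A, X_n in B) - P(X_0 in A) P(X_n in B)
       = lam^n p (1 - p) (1_A(1) - 1_A(0)) (1_B(1) - 1_B(0))].
    Every mixing coefficient at lag [n] is therefore [O(|lam|^n)]; for [psi]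
    and [phi] one also uses that an event of positive probability for [X_k]
    has probability at least [p (1 - p)]. *)

From HB Require Import structures.
From mathcomp Require Import all_boot all_order all_algebra.
From mathcomp Require Import all_classical all_reals all_analysis.
From mathcomp Require Import ring lra.
Import Order.TTheory GRing.Theory Num.Theory.
Set Implicit Arguments. Unset Strict Implicit. Unset Printing Implicit Defensive.
Local Open Scope classical_set_scope.
Local Open Scope ring_scope.

Lemma zeror_eq1 (R : nzSemiRingType) : (0 == 1 :> R) = false.
Proof. by rewrite eq_sym oner_eq0. Qed.

Lemma sum_indic_trivIset_le1 (T : Type) (R : numDomainType) (I : finType)
    (A : I -> set T) x :
  trivIset setT A -> \sum_(i : I) \1_(A i) x <= 1 :> R.
Proof.
move=> tA; have [[i0 Ai0]|nA] := pselect (exists i, A i x); last first.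
  by rewrite big1 // => i _; rewrite indicE memNset // => Aix; apply: nA; exists i.
rewrite (bigD1 i0) //= big1 ?addr0 ?indicE ?mem_set// => i ni.
rewrite indicE memNset // => Aix; move/eqP: ni; apply.
by apply: (tA i i0) => //; exists x.
Qed.

Section ProbabilityFacts.
Context d (Omega : measurableType d) (R : realType) (P : probability Omega R).
Local Notation prob := (prob P).
Local Notation expect := (expect P).

Lemma probE A : measurable A -> P A = (prob A)%:E.
Proof. by move=> mA; rewrite /prob fineK// fin_num_measure. Qed.

Lemma prob_ge0 A : 0 <= prob A.
Proof. by rewrite /prob fine_ge0. Qed.

Lemma prob_setT : prob setT = 1.
Proof. by rewrite /prob probability_setT. Qed.

Lemma prob_set0 : prob set0 = 0.
Proof. by rewrite /prob measure0. Qed.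

Lemma prob_le A B : measurable A -> measurable B -> A `<=` B -> prob A <= prob B.
Proof.
move=> mA mB AB; rewrite -lee_fin -!probE//.
by apply: le_measure; rewrite ?inE.
Qed.

Lemma probU A B : measurable A -> measurable B -> A `&` B = set0 ->
  prob (A `|` B) = prob A + prob B.
Proof.
move=> mA mB AB; rewrite /prob measureU// fineD// fin_num_measure//.
Qed.

Lemma probD A B : measurable A -> measurable B -> B `<=` A ->
  prob (A `\` B) = prob A - prob B.
Proof.
move=> mA mB BA; apply/eqP; rewrite eq_sym subr_eq -probU.
- by rewrite setDKU.
- exact: measurableD.
- by [].
- by rewrite setIC setDIK.
Qed.

Lemma subset_prob0 A B : measurable A -> measurable B -> A `<=` B ->
  prob B = 0 -> prob A = 0.
Proof.
by move=> mA mB AB B0; apply/eqP; rewrite eq_le prob_ge0 andbT -B0 prob_le.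
Qed.

Lemma negligible_prob0 A : measurable A -> prob A = 0 -> P.-negligible A.
Proof. by move=> mA A0; apply/(negligibleP _ mA); have := probE mA; rewrite A0. Qed.

Lemma expect_ae_eq f g : measurable_fun setT f -> measurable_fun setT g ->
  {ae P, forall w, f w = g w} -> expect f = expect g.
Proof.
move=> mf mg fg; rewrite /expect /Rintegral (ae_eq_integral (EFin \o g))//.
- exact/measurable_realfun.measurable_EFinP.
- exact/measurable_realfun.measurable_EFinP.
- by apply: filterS fg => w /= -> _.
Qed.

Lemma prob_expect A : measurable A -> prob A = expect \1_A.
Proof.
by move=> mA; rewrite /expect /Rintegral integral_indic// setIT.
Qed.

Lemma prob_ae_eq A B : measurable A -> measurable B ->
  {ae P, forall w, A w <-> B w} -> prob A = prob B.
Proof.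
move=> mA mB AB; rewrite !prob_expect//; apply: expect_ae_eq.
- exact: measurable_realfun.measurable_indic.
- exact: measurable_realfun.measurable_indic.
apply: filterS AB => w AB; rewrite !indicE.
by have -> : (w \in A) = (w \in B) by apply/idP/idP => /set_mem/AB/mem_set.
Qed.

Lemma expect_sum_indic (I : Type) (s : seq I) (c : I -> R) (E : I -> set Omega) :
  (forall k, measurable (E k)) ->
  expect (fun w => \sum_(k <- s) c k * \1_(E k) w) = \sum_(k <- s) c k * prob (E k).
Proof.
move=> mE; rewrite /expect /Rintegral.
under eq_integral do rewrite -sumEFin.
rewrite integral_sum//; last first.
  move=> k; under eq_fun do rewrite EFinM.
  exact/integrableZl/integrable_indic.
rewrite (eq_bigr (fun k => (c k * prob (E k))%:E)) ?sumEFin// => k _.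
under eq_integral do rewrite EFinM.
rewrite integralZl ?integral_indic ?setIT ?EFinM -?probE//.
exact: integrable_indic.
Qed.

Section DistributionFunction.
Variable Y : Omega -> R.
Hypothesis measurable_Y : measurable_fun setT Y.
Local Notation cdf x := (prob (Y @^-1` `]-oo, x])).

Let measurable_cdf_set x : measurable (Y @^-1` `]-oo, x]).
Proof. by rewrite -[_ @^-1` _]setTI; apply: measurable_Y => //; exact: measurable_itv. Qed.

Lemma negligible_lt_cdf0 v : (forall x, x < v -> cdf x = 0) ->
  P.-negligible [set w | Y w < v].
Proof.
move=> cdf0; apply: (@negligibleS _ _ _ _ (\bigcup_k Y @^-1` `]-oo, v - k.+1%:R^-1])).
  move=> w /= /ltr_add_invr[k ltv]; exists k => //=.
  by rewrite in_itv /= lerBrDr ltW.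
apply: negligible_bigcup => k; apply: negligible_prob0 => //; apply: cdf0.
by rewrite ltrBlDr ltrDl invr_gt0 ltr0n.
Qed.

Lemma negligible_cdf_const u v : (forall x, u <= x < v -> cdf x = cdf u) ->
  P.-negligible [set w | u < Y w < v].
Proof.
move=> cdfu.
apply: (@negligibleS _ _ _ _
  (\bigcup_k (Y @^-1` `]-oo, v - k.+1%:R^-1] `\` Y @^-1` `]-oo, u]))).
  move=> w /= /andP[ltuY /ltr_add_invr[k ltv]]; exists k => //=.
  rewrite !in_itv /= lerBrDr ltW//; split=> //.
  by apply/negP; rewrite -ltNge.
apply: negligible_bigcup => k; set x := v - _.
have [lexu|ltux] := leP x u.
  apply: (negligibleS _ (negligible_set0 P)) => w [/=].
  by rewrite !in_itv /= => /le_trans/(_ lexu) ->.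
apply: negligible_prob0; first exact: measurableD.
rewrite probD//; last by move=> w /=; rewrite !in_itv /= => /le_trans->//; exact: ltW.
rewrite cdfu ?subrr// ltW//=.
by rewrite /x ltrBlDr ltrDl invr_gt0 ltr0n.
Qed.

Lemma negligible_gt_cdf1 u : cdf u = 1 -> P.-negligible [set w | u < Y w].
Proof.
move=> cdf1; have -> : [set w | u < Y w] = ~` (Y @^-1` `]-oo, u]).
  by apply/seteqP; split => w /=; rewrite in_itv /= ltNge => /negP.
apply/negligibleP; first exact: measurableC.
apply: eq_trans (probability_setC P (measurable_cdf_set u)) _.
by rewrite probE// cdf1 subee.
Qed.

End DistributionFunction.

End ProbabilityFacts.

Lemma indic_preimage1 (T : Type) (R : pzRingType) (Y : T -> R) (y : R) (w : T) :
  \1_(Y @^-1` [set y]) w = (Y w == y)%:R :> R.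
Proof.
by rewrite indicE; have -> : (w \in Y @^-1` [set y]) = (Y w == y)
  by apply/idP/eqP => [/set_mem|/mem_set].
Qed.

Section TwoStateProcess.
Context d (Omega : measurableType d) (R : realType) (P : probability Omega R).
Variable X : nat -> Omega -> R.
Hypothesis measurable_X : forall t, measurable_fun setT (X t).
Hypothesis X01 : {ae P, forall w, forall t, X t w = 0 \/ X t w = 1}.
Local Notation prob := (prob P).
Local Notation expect := (expect P).

Lemma measurable_X_preimage t A : measurable A -> measurable (X t @^-1` A).
Proof. by move=> mA; rewrite -[_ @^-1` _]setTI; apply: measurable_X. Qed.

Let measurable_X1 t y : measurable (X t @^-1` [set y]).
Proof. exact: measurable_X_preimage (measurable_set1 y). Qed.

Lemma prob_X_split k A : measurable A ->
  prob A = prob (A `&` X k @^-1` [set 0]) + prob (A `&` X k @^-1` [set 1]).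
Proof.
move=> mA; have mAX y : measurable (A `&` X k @^-1` [set y]) by exact: measurableI.
rewrite -probU//; last first.
  apply/seteqP; split => w // [[_ /= ->] [_ /= /eqP]].
  by rewrite eq_sym oner_eq0.
apply: prob_ae_eq => //; first exact: measurableU.
apply: filterS X01 => w w01; split => [Aw|[[]|[]]] //.
by case: (w01 k) => ?; [left|right].
Qed.

Lemma prob_X_eq0 t y : y != 0 -> y != 1 -> prob (X t @^-1` [set y]) = 0.
Proof.
move=> y0 y1; rewrite -(prob_set0 P); apply: prob_ae_eq => //.
apply: filterS X01 => w w01; split => // /= Xy.
by case: (w01 t) => Xw; move: y0 y1; rewrite -Xy Xw eqxx.
Qed.

Lemma expect_X_pair s t (F : R -> R -> R) :
  measurable_fun setT (fun w => F (X s w) (X t w)) ->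
  expect (fun w => F (X s w) (X t w)) = \sum_(i <- [:: 0; 1]) \sum_(j <- [:: 0; 1])
    F i j * prob (X s @^-1` [set i] `&` X t @^-1` [set j]).
Proof.
move=> mF; pose ij : seq (R * R) := [seq (i, j) | i <- [:: 0; 1], j <- [:: 0; 1]].
pose E k := X s @^-1` [set k.1] `&` X t @^-1` [set k.2].
rewrite -(big_allpairs (F := fun k => F k.1 k.2 * prob (E k))).
rewrite -(expect_sum_indic P ij (fun k => F k.1 k.2)); last by move=> k; exact: measurableI.
apply: expect_ae_eq => //.
  apply: measurable_sum => k; apply: measurable_realfun.measurable_funM.
    exact: measurable_cst.
  by apply: measurable_realfun.measurable_indic; exact: measurableI.
apply: filterS X01 => w w01; rewrite /= !big_cons big_nil /E /= !indicI /=.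
rewrite !indic_preimage1 /=.
by case: (w01 s) => ->; case: (w01 t) => ->;
  rewrite !eqxx ?zeror_eq1 ?oner_eq0 /=; ring.
Qed.

Lemma prob_X_preimage t A : measurable A -> prob (X t @^-1` A) =
  \1_A 0 * prob (X t @^-1` [set 0]) + \1_A 1 * prob (X t @^-1` [set 1]).
Proof.
move=> mA; rewrite (prob_X_split t (measurable_X_preimage t mA)) !indicE.
have cut y : X t @^-1` A `&` X t @^-1` [set y] =
    if y \in A then X t @^-1` [set y] else set0.
  apply/seteqP; case: ifPn => [/set_mem Ay|/negP yA]; split => w //=.
  - by case.
  - by move=> Xy; rewrite Xy.
  - by case=> Aw Xy; apply: yA; rewrite -Xy; exact: mem_set.
by rewrite !cut; case: (0 \in A); case: (1 \in A); rewrite ?prob_set0 /=; ring.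
Qed.

Lemma prob_X_pair_preimage s t A B : measurable A -> measurable B ->
  prob (X s @^-1` A `&` X t @^-1` B) = \sum_(i <- [:: 0; 1]) \sum_(j <- [:: 0; 1])
    \1_A i * \1_B j * prob (X s @^-1` [set i] `&` X t @^-1` [set j]).
Proof.
move=> mA mB.
rewrite prob_expect;
  last exact: measurableI (measurable_X_preimage _ mA) (measurable_X_preimage _ mB).
rewrite -(expect_X_pair (F := fun x y => \1_A x * \1_B y)); first by rewrite indicI.
by apply: measurable_realfun.measurable_funM; apply: measurableT_comp (measurable_X _);
  exact: measurable_realfun.measurable_indic.
Qed.

Section Markov.
Hypothesis markov : discrete_markov P X.
Variable Q : nat -> R -> R -> R.
Hypothesis Q0 : forall i j, Q 0 i j = (i == j)%:R.
Hypothesis prob_X_step : forall t i j,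
  prob (X t @^-1` [set i] `&` X t.+1 @^-1` [set j]) = prob (X t @^-1` [set i]) * Q 1 i j.
Hypothesis Q_chapman_kolmogorov : forall n i j, (i == 0) || (i == 1) ->
  Q 1 i 0 * Q n 0 j + Q 1 i 1 * Q n 1 j = Q n.+1 i j.

Definition cylinder m (x : nat -> R) := \bigcap_(i in `I_m.+1) X i @^-1` [set x i].

Definition extend (x : nat -> R) m k i := if (i <= m)%N then x i else k.

Lemma measurable_cylinder m x : measurable (cylinder m x).
Proof. by apply: bigcap_measurable => [|k _]; [exists 0%N|exact: measurable_X1]. Qed.

Lemma cylinder0 x : cylinder 0 x = X 0 @^-1` [set x 0%N].
Proof.
apply/seteqP; split => [w|w Xw i]; first exact.
by rewrite /= ltnS leqn0 => /eqP ->.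
Qed.

Lemma cylinder_sub m x : cylinder m x `<=` X m @^-1` [set x m].
Proof. by move=> w /(_ m (ltnSn m)). Qed.

Lemma cylinder_extend m x k :
  cylinder m.+1 (extend x m k) = cylinder m x `&` X m.+1 @^-1` [set k].
Proof.
apply/seteqP; split => [w Xw|w [Xw Xk] i /=].
  split; last by have := Xw m.+1 (ltnSn _); rewrite /extend ltnn.
  by move=> i /= im; have := Xw i (ltnW im); rewrite /extend -ltnS im.
rewrite /extend ltnS leq_eqVlt => /orP[/eqP ->|im]; first by rewrite ltnn.
by rewrite -ltnS im; exact: Xw.
Qed.

Lemma extend_prefix m x k : cylinder m (extend x m k) = cylinder m x.
Proof. by apply/seteqP; split => w Xw i /= im; have := Xw i im; rewrite /extend -ltnS im. Qed.

Lemma prob_cylinder0 m x : prob (X m @^-1` [set x m]) = 0 -> prob (cylinder m x) = 0.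
Proof. exact/subset_prob0/cylinder_sub/measurable_X1/measurable_cylinder. Qed.

Lemma prob_cylinder_step m x j :
  prob (cylinder m x `&` X m.+1 @^-1` [set j]) = prob (cylinder m x) * Q 1 (x m) j.
Proof.
have := markov m (extend x m j).
rewrite -/(cylinder m.+1 _) -/(cylinder m _) cylinder_extend extend_prefix.
rewrite /extend leqnn ltnn prob_X_step.
have [Xm0|Xm0] := eqVneq (prob (X m @^-1` [set x m])) 0.
  have cyl0 := prob_cylinder0 Xm0.
  move=> _; rewrite cyl0 mul0r; apply: (subset_prob0 _ _ _ cyl0).
  - exact: measurableI (measurable_cylinder _ _) (measurable_X1 _ _).
  - exact: measurable_cylinder.
  - by move=> w [].
by move=> step; apply/(mulIf Xm0); rewrite step; ring.
Qed.

Lemma prob_cylinder_lag n m x j : prob (cylinder m x `&` X (m + n).+1 @^-1` [set j]) =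
  prob (cylinder m x) * Q n.+1 (x m) j.
Proof.
elim: n m x => [|n IH] m x; first by rewrite addn0 prob_cylinder_step.
have via_next k : prob (cylinder m x `&` X (m + n.+1).+1 @^-1` [set j]
      `&` X m.+1 @^-1` [set k]) = prob (cylinder m x) * Q 1 (x m) k * Q n.+1 k j.
  rewrite setIAC -cylinder_extend addnS -addSn IH -prob_cylinder_step.
  by rewrite cylinder_extend /extend ltnn.
rewrite (prob_X_split m.+1) ?via_next; last first.
  exact: measurableI (measurable_cylinder _ _) (measurable_X1 _ _).
have [x01|/norP[x0 x1]] := boolP ((x m == 0) || (x m == 1)).
  by rewrite -(Q_chapman_kolmogorov n.+1 j x01); ring.
by rewrite prob_cylinder0 ?prob_X_eq0//; ring.
Qed.

Lemma prob_X0_Xn n i j :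
  prob (X 0 @^-1` [set i] `&` X n @^-1` [set j]) = prob (X 0 @^-1` [set i]) * Q n i j.
Proof.
case: n => [|n]; last by have := prob_cylinder_lag n 0 (fun=> i) j; rewrite add0n cylinder0.
rewrite Q0; have [<-|ij] := eqVneq i j; first by rewrite setIid mulr1.
rewrite mulr0 -(prob_set0 P); congr prob.
by apply/seteqP; split => w // [/= -> ji]; rewrite ji eqxx in ij.
Qed.

End Markov.

End TwoStateProcess.

Section BernoulliCopulaChain.
Context (R : realType) (a p : R) d (Omega : measurableType d)
  (P : probability Omega R) (X : nat -> Omega -> R).
Hypothesis a01 : 0 < a < 1.
Hypothesis p01 : 0 < p < 1.
Hypothesis copula : copula_generated P X (mix_copula a) (bernoulli_cdf p).
Local Notation prob := (prob P).

Lemma measurable_X t : measurable_fun setT (X t).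
Proof. by case: copula. Qed.

Lemma prob_X_le t x : prob (X t @^-1` `]-oo, x]) = bernoulli_cdf p x.
Proof. by case: copula => _ []. Qed.

Let measurable_X1 t y : measurable (X t @^-1` [set y]) :=
  measurable_X_preimage measurable_X t (measurable_set1 y).

Let measurable_X_le t x : measurable (X t @^-1` `]-oo, x]) :=
  measurable_X_preimage measurable_X t (measurable_itv `]-oo, x]).

Lemma X01 : {ae P, forall w, forall t, X t w = 0 \/ X t w = 1}.
Proof.
have off01 t : P.-negligible
    ([set w | X t w < 0] `|` [set w | 0 < X t w < 1] `|` [set w | 1 < X t w]).
  apply: negligibleU; first apply: negligibleU.
  - apply: (negligible_lt_cdf0 (measurable_X t)) => x x0.
    by rewrite prob_X_le /bernoulli_cdf x0.
  - apply: (negligible_cdf_const (measurable_X t)) => x /andP[x0 x1].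
    by rewrite !prob_X_le /bernoulli_cdf ltxx ltr01 ltNge x0 x1.
  - apply: (negligible_gt_cdf1 (measurable_X t)).
    by rewrite prob_X_le /bernoulli_cdf ltr10 ltxx.
apply: negligibleS (negligible_bigcup off01) => w /= /existsNP[t not01]; exists t => //.
case: (ltgtP (X t w) 0) => [|X0|X0]; [by left; left| |by case: not01; left].
case: (ltgtP (X t w) 1) => [X1|X1|X1]; [by left; right; apply/andP|by right|].
by case: not01; right.
Qed.

Definition bern_pmf (y : R) : R := if y == 1 then p else if y == 0 then 1 - p else 0.

Lemma bern_pmf0 : bern_pmf 0 = 1 - p. Proof. by rewrite /bern_pmf zeror_eq1 eqxx. Qed.
Lemma bern_pmf1 : bern_pmf 1 = p. Proof. by rewrite /bern_pmf eqxx. Qed.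

Lemma prob_X_eq t y : prob (X t @^-1` [set y]) = bern_pmf y.
Proof.
have X_eq0 : prob (X t @^-1` [set 0]) = 1 - p.
  have := prob_X_le t 0; rewrite /bernoulli_cdf ltxx ltr01 => <-.
  apply: prob_ae_eq; [exact: measurable_X1|exact: measurable_X_le|].
  apply: filterS X01 => w /(_ t) X01w /=; rewrite in_itv /=.
  by split => [->//|]; case: X01w => -> //; rewrite ler10.
have [->|y0] := eqVneq y 0; first by rewrite bern_pmf0.
have [->|y1] := eqVneq y 1.
  have := prob_X_split measurable_X X01 t (@measurableT _ Omega).
  rewrite !setTI prob_setT X_eq0 bern_pmf1; lra.
by rewrite (prob_X_eq0 measurable_X X01)// /bern_pmf (negbTE y1) (negbTE y0).
Qed.

Definition lam := 1 - (1 - a) / Num.max p (1 - p).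

Definition trans n (i j : R) := bern_pmf j + lam ^+ n * ((i == j)%:R - bern_pmf j).

Lemma mix_copula_bern00 : mix_copula a (1 - p) (1 - p) = (1 - p) * ((1 - p) + lam * p).
Proof.
have /andP[p0 p1] := p01; rewrite /mix_copula /lam minxx.
by case: (leP p (1 - p)) => lep; [rewrite max_l; last lra|rewrite max_r; last lra];
  field; apply/eqP; lra.
Qed.

Lemma prob_X00 t :
  prob (X t @^-1` [set 0] `&` X t.+1 @^-1` [set 0]) = (1 - p) * ((1 - p) + lam * p).
Proof.
case: copula => _ [_ /(_ t 0 0)]; rewrite /bernoulli_cdf ltxx ltr01 mix_copula_bern00 => <-.
apply: prob_ae_eq.
- exact: measurableI.
- exact: measurableI.
apply: filterS X01 => w X01w /=; rewrite !in_itv /=.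
split => [[-> ->]//|[Xt Xt1]].
by case: (X01w t) (X01w t.+1) Xt Xt1 => -> [] -> //; rewrite ler10.
Qed.

Lemma prob_X_step t i j : prob (X t @^-1` [set i] `&` X t.+1 @^-1` [set j]) =
  prob (X t @^-1` [set i]) * trans 1 i j.
Proof.
have mXX k l : measurable (X t @^-1` [set k] `&` X t.+1 @^-1` [set l]).
  exact: measurableI.
have [i01|/norP[i0 i1]] := boolP ((i == 0) || (i == 1)); last first.
  have Xi0 := prob_X_eq0 measurable_X X01 t i0 i1.
  by rewrite Xi0 mul0r; apply: (subset_prob0 _ _ _ Xi0).
have [j01|/norP[j0 j1]] := boolP ((j == 0) || (j == 1)); last first.
  have ij : (i == j) = false.
    by case/orP: i01 => /eqP ->; rewrite eq_sym ?(negbTE j0) ?(negbTE j1).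
  rewrite /trans /bern_pmf (negbTE j1) (negbTE j0) ij subr0 mulr0 addr0 mulr0.
  by apply: (subset_prob0 _ _ _ (prob_X_eq0 measurable_X X01 t.+1 j0 j1)).
have split_t k y := prob_X_split measurable_X X01 k (measurable_X1 t y).
have Xt0 := split_t t.+1 0; have Xt1 := split_t t.+1 1.
have Xs0 := prob_X_split measurable_X X01 t (measurable_X1 t.+1 0).
rewrite setIC [X in _ + prob X]setIC in Xs0.
rewrite !prob_X_eq bern_pmf0 bern_pmf1 prob_X00 in Xt0 Xt1 Xs0.
rewrite prob_X_eq /trans expr1.
by case/orP: i01 => /eqP ->; case/orP: j01 => /eqP ->;
  rewrite ?bern_pmf0 ?bern_pmf1 ?prob_X00 ?eqxx ?zeror_eq1 ?oner_eq0 /=; lra.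
Qed.

Lemma trans0 i j : trans 0 i j = (i == j)%:R.
Proof. by rewrite /trans expr0; ring. Qed.

Lemma bern_pmfE j : bern_pmf j = (1 == j)%:R * p + (0 == j)%:R * (1 - p).
Proof.
have [->|j0] := eqVneq j 0; first by rewrite bern_pmf0 oner_eq0 /=; ring.
have [->|j1] := eqVneq j 1; first by rewrite bern_pmf1 /=; ring.
by rewrite /bern_pmf (negbTE j0) (negbTE j1) /=; ring.
Qed.

Lemma trans_chapman_kolmogorov n i j : (i == 0) || (i == 1) ->
  trans 1 i 0 * trans n 0 j + trans 1 i 1 * trans n 1 j = trans n.+1 i j.
Proof.
rewrite /trans bern_pmf0 bern_pmf1 bern_pmfE expr1 exprS.
by case/orP => /eqP ->; rewrite ?eqxx ?zeror_eq1 ?oner_eq0 /=; ring.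
Qed.

Definition jump (A : set R) : R := \1_A 1 - \1_A 0.

Lemma jump_le1 A : `|jump A| <= 1.
Proof.
by rewrite /jump !indicE; case: (1 \in A); case: (0 \in A);
  rewrite /= ?subrr ?subr0 ?sub0r ?normrN ?normr0 ?normr1; lra.
Qed.

Lemma jump_le_indic A : `|jump A| <= \1_A 1 + \1_A 0.
Proof.
by rewrite /jump !indicE; case: (1 \in A); case: (0 \in A);
  rewrite /= ?subrr ?subr0 ?sub0r ?normrN ?normr0 ?normr1; lra.
Qed.

Lemma pq_gt0 : 0 < p * (1 - p).
Proof. by have /andP[p0 p1] := p01; apply: mulr_gt0; lra. Qed.

Lemma pq_le1 : p * (1 - p) <= 1.
Proof. by have /andP[p0 p1] := p01; nra. Qed.

Lemma prob_X_preimage_ge k A : measurable A -> 0 < prob (X k @^-1` A) ->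
  p * (1 - p) <= prob (X k @^-1` A).
Proof.
have /andP[p0 p1] := p01; move=> mA.
rewrite (prob_X_preimage measurable_X X01)// !prob_X_eq bern_pmf0 bern_pmf1 !indicE.
by case: (0 \in A); case: (1 \in A); rewrite /=; nra.
Qed.

Lemma sum_jump_le2 (I : finType) (A : I -> set R) :
  trivIset setT A -> \sum_(i : I) `|jump (A i)| <= 2.
Proof.
move=> tA; apply: le_trans (ler_sum _ (fun i _ => jump_le_indic (A i))) _.
rewrite big_split /=.
have := sum_indic_trivIset_le1 R 1 tA; have := sum_indic_trivIset_le1 R 0 tA; lra.
Qed.

Lemma lam_lt1 : `|lam| < 1.
Proof.
have /andP[a0 a1] := a01; have /andP[p0 p1] := p01.
have [leM leM'] : p <= Num.max p (1 - p) /\ 1 - p <= Num.max p (1 - p).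
  by rewrite !le_max !lexx orbT.
have M0 : 0 < Num.max p (1 - p) by lra.
have q2 : (1 - a) / Num.max p (1 - p) < 2 by rewrite ltr_pdivrMr //; lra.
have q0 : 0 < (1 - a) / Num.max p (1 - p) by apply: divr_gt0 => //; lra.
by rewrite ltr_norml /lam; apply/andP; split; lra.
Qed.

Section Mixing.
Hypothesis markov : discrete_markov P X.

Local Notation r := `|lam|.

Lemma prob_X0_Xn_eq n i j :
  prob (X 0 @^-1` [set i] `&` X n @^-1` [set j]) = bern_pmf i * trans n i j.
Proof.
rewrite (prob_X0_Xn measurable_X X01 markov trans0 prob_X_step) ?prob_X_eq//.
exact: trans_chapman_kolmogorov.
Qed.

Lemma prob_X0_Xn_dependence n A B : measurable A -> measurable B ->
  prob (X 0 @^-1` A `&` X n @^-1` B) - prob (X 0 @^-1` A) * prob (X n @^-1` B) =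
  lam ^+ n * (p * (1 - p)) * (jump A * jump B).
Proof.
move=> mA mB.
rewrite (prob_X_pair_preimage measurable_X X01)//.
rewrite (prob_X_preimage measurable_X X01 0 mA) (prob_X_preimage measurable_X X01 n mB).
rewrite !big_cons !big_nil !prob_X0_Xn_eq !prob_X_eq /trans /jump bern_pmf0 bern_pmf1.
by rewrite !eqxx zeror_eq1 oner_eq0 /=; ring.
Qed.

Lemma var_X k f : measurable_fun setT f ->
  var P (f \o X k) = p * (1 - p) * (f 1 - f 0) ^+ 2.
Proof.
move=> mf.
have mfX : measurable_fun setT (f \o X k) by exact: measurableT_comp mf (measurable_X k).
rewrite /var (expect_X_pair measurable_X X01 (s := 0) (F := fun _ y => f y ^+ 2)); last first.
  exact: measurable_realfun.measurable_funX.
rewrite (expect_X_pair measurable_X X01 (s := 0) (F := fun _ y => f y))//.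
rewrite !big_cons !big_nil !prob_X0_Xn_eq /trans bern_pmf0 bern_pmf1.
by rewrite !eqxx zeror_eq1 oner_eq0 /=; ring.
Qed.

Lemma cov_X0_Xn n f g : measurable_fun setT f -> measurable_fun setT g ->
  cov P (f \o X 0) (g \o X n) = lam ^+ n * (p * (1 - p) * (f 1 - f 0) * (g 1 - g 0)).
Proof.
move=> mf mg.
have mfX : measurable_fun setT (f \o X 0) by exact: measurableT_comp mf (measurable_X 0).
have mgX : measurable_fun setT (g \o X n) by exact: measurableT_comp mg (measurable_X n).
rewrite /cov (expect_X_pair measurable_X X01 (F := fun x y => f x * g y)); last first.
  exact: measurable_realfun.measurable_funM.
rewrite (expect_X_pair measurable_X X01 (t := n) (F := fun x _ => f x))//.
rewrite (expect_X_pair measurable_X X01 (s := 0) (F := fun _ y => g y))//.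
rewrite !big_cons !big_nil !prob_X0_Xn_eq /trans bern_pmf0 bern_pmf1.
by rewrite !eqxx zeror_eq1 oner_eq0 /=; ring.
Qed.

Lemma dependence_le n A B : measurable A -> measurable B ->
  `|prob (X 0 @^-1` A `&` X n @^-1` B) - prob (X 0 @^-1` A) * prob (X n @^-1` B)|
    <= r ^+ n * (p * (1 - p)).
Proof.
move=> mA mB.
rewrite prob_X0_Xn_dependence// normrM normrM normrX (gtr0_norm pq_gt0) normrM.
apply: ler_piMr; first by rewrite mulr_ge0 ?exprn_ge0// ltW// pq_gt0.
by rewrite -[1]mulr1 ler_pM ?jump_le1.
Qed.

Lemma psi_mix_exp_decay : exp_decay (psi_mix P X).
Proof.
exists (p * (1 - p))^-1, r; split; [exact: normr_ge0|exact: lam_lt1|] => n.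
apply: ge_ereal_sup => _ [A [B [mA mB PA PB ->]]]; rewrite lee_fin.
set pA := prob (X 0 @^-1` A) in PA *; set pB := prob (X n @^-1` B) in PB *.
have PAB : 0 < pA * pB by apply: mulr_gt0.
rewrite -[X in X / _ - 1](subrK (pA * pB)) mulrDl divff ?gt_eqF// addrK.
rewrite normrM normfV (gtr0_norm PAB) ler_pdivrMr//.
apply: le_trans (dependence_le n mA mB) _.
have pq := pq_gt0; have pqA := prob_X_preimage_ge mA PA; have pqB := prob_X_preimage_ge mB PB.
rewrite mulrAC [X in _ <= X]mulrC ler_wpM2l ?exprn_ge0// ler_pdivlMl//.
exact: ler_pM (ltW pq) (ltW pq) pqA pqB.
Qed.

Lemma phi_mix_exp_decay : exp_decay (phi_mix P X).
Proof.
exists 1, r; split; [exact: normr_ge0|exact: lam_lt1|] => n.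
apply: ge_ereal_sup => _ [A [B [mA mB PA ->]]]; rewrite lee_fin mul1r.
set pA := prob (X 0 @^-1` A) in PA *.
rewrite -[X in X / _ - _](subrK (pA * prob (X n @^-1` B))) mulrDl mulrAC divff ?gt_eqF//.
rewrite mul1r addrK normrM normfV (gtr0_norm PA) ler_pdivrMr//.
apply: le_trans (dependence_le n mA mB) _.
by rewrite ler_wpM2l ?exprn_ge0// prob_X_preimage_ge.
Qed.

Lemma alpha_mix_exp_decay : exp_decay (alpha_mix P X).
Proof.
exists 1, r; split; [exact: normr_ge0|exact: lam_lt1|] => n.
apply: ge_ereal_sup => _ [A [B [mA mB ->]]]; rewrite lee_fin mul1r.
apply: le_trans (dependence_le n mA mB) _.
by rewrite ler_piMr ?exprn_ge0// pq_le1.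
Qed.

Lemma beta_mix_exp_decay : exp_decay (beta_mix P X).
Proof.
exists 2, r; split; [exact: normr_ge0|exact: lam_lt1|] => n.
apply: ge_ereal_sup => _ [I [J [A [B [[mA tA _] [mB tB _] ->]]]]]; rewrite lee_fin.
set c := r ^+ n * (p * (1 - p)).
have c0 : 0 <= c by rewrite mulr_ge0 ?exprn_ge0// ltW// pq_gt0.
have cr : c <= r ^+ n by rewrite ler_piMr ?exprn_ge0// pq_le1.
have dep i j : `|prob (X 0 @^-1` A i `&` X n @^-1` B j) -
    prob (X 0 @^-1` A i) * prob (X n @^-1` B j)| = c * `|jump (A i)| * `|jump (B j)|.
  rewrite prob_X0_Xn_dependence// normrM normrM normrX (gtr0_norm pq_gt0) normrM.
  by rewrite mulrA.
under eq_bigr do under eq_bigr do rewrite dep.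
rewrite (eq_bigr (fun i => c * `|jump (A i)| * \sum_(j < J) `|jump (B j)|)); last first.
  by move=> i _; rewrite mulr_sumr.
rewrite -mulr_suml -mulr_sumr -mulrA.
have sA := sum_jump_le2 tA; have sB := sum_jump_le2 tB.
have sB0 : 0 <= \sum_(j < J) `|jump (B j)| by rewrite sumr_ge0.
have sA0 : 0 <= \sum_(i < I) `|jump (A i)| by rewrite sumr_ge0.
have : c * ((\sum_(i < I) `|jump (A i)|) * (\sum_(j < J) `|jump (B j)|)) <= c * (2 * 2).
  by rewrite ler_wpM2l// ler_pM.
set s := _ * (_ * _); move=> hs; nra.
Qed.

Lemma rho_mix_exp_decay : exp_decay (rho_mix P X).
Proof.
exists 1, r; split; [exact: normr_ge0|exact: lam_lt1|] => n.
apply: ge_ereal_sup => _ [f [g [[mf mg] _ _ ->]]]; rewrite lee_fin mul1r.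
rewrite cov_X0_Xn// !var_X//.
set s := p * (1 - p) * (f 1 - f 0) * (g 1 - g 0).
have -> : p * (1 - p) * (f 1 - f 0) ^+ 2 * (p * (1 - p) * (g 1 - g 0) ^+ 2) = s ^+ 2.
  by rewrite /s; ring.
rewrite sqrtr_sqr normrM normrX.
have [->|s0] := eqVneq s 0; first by rewrite normr0 mulr0 mul0r.
by rewrite mulfK ?normr_eq0.
Qed.

End Mixing.

End BernoulliCopulaChain.

Theorem theorem2 (R : realType) (a p : R) (d : measure_display)
  (Omega : measurableType d) (P : probability Omega R) (X : nat -> Omega -> R) :
  0 < a < 1 -> 0 < p < 1 ->
  copula_generated P X (mix_copula a) (bernoulli_cdf p) ->
  discrete_markov P X ->
  [/\ exp_decay (psi_mix P X), exp_decay (phi_mix P X), exp_decay (rho_mix P X),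
      exp_decay (beta_mix P X) & exp_decay (alpha_mix P X)].
Proof.
move=> a01 p01 copula markov; split.
- exact: psi_mix_exp_decay a01 p01 copula markov.
- exact: phi_mix_exp_decay a01 p01 copula markov.
- exact: rho_mix_exp_decay a01 p01 copula markov.
- exact: beta_mix_exp_decay a01 p01 copula markov.
- exact: alpha_mix_exp_decay a01 p01 copula markov.
Qed.
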